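(* For every integer $n\ge 4$, $px_{3,2}(K_n)=2$.
   Context: All graphs are finite, simple and undirected. An edge-coloring of a graph may assign the same color to adjacent edges. A tree $T$ in an edge-colored graph is a proper tree if no two adjacent edges of $T$ receive the same color. For $S\subseteq V(G)$ with $|S|\ge 2$, an $S$-tree is a tree in $G$ containing all vertices of $S$. $S$-trees $T_1,\dots,T_\ell$ are internally disjoint if $E(T_i)\cap E(T_j)=\emptyset$ and $V(T_i)\cap V(T_j)=S$ for all $i\ne j$. For a connected graph $G$ of order $n$ and integers $k,\ell$ with $2\le k\le n$ and $1\le \ell\le \kappa_k(G)$ (where $\kappa_k(G)$ is the minimum, over all $k$-subsets $S$ of $V(G)$, of the maximum number of internally disjoint $S$-trees), the $(k,\ell)$-proper index $px_{k,\ell}(G)$ is the minimum number of colors in an edge-coloring of $G$ such that for every $k$-subset $S$ of $V(G)$ there exist $\ell$ internally disjoint proper $S$-trees. *)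

From mathcomp Require Import all_boot.
Set Implicit Arguments. Unset Strict Implicit. Unset Printing Implicit Defensive.

Section Defs.
Variable T : finType.

Definition simple_graph (adj : rel T) : Prop :=
  (forall x, ~~ adj x x) /\ (forall x y, adj x y = adj y x).

Definition edges (adj : rel T) : {set {set T}} :=
  [set e : {set T} | [exists x, exists y, adj x y && (e == [set x; y])]].

(* An edge-coloring with (at most) c colors: a color in 'I_c for each edge
   (values on non-edges are irrelevant). *)
Definition coloring (c : nat) := {set T} -> 'I_c.

Definition erel (E : {set {set T}}) : rel T := fun x y => [set x; y] \in E.

Definition is_tree (adj : rel T) (V : {set T}) (E : {set {set T}}) : Prop :=
  [/\ E \subset edges adj,
      (forall e, e \in E -> e \subset V),
      V != set0,
      (forall x y, x \in V -> y \in V -> connect (erel E) x y)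
    & #|E| + 1 = #|V| ].

Definition proper_tree c (col : coloring c) (E : {set {set T}}) : Prop :=
  forall e1 e2, e1 \in E -> e2 \in E -> e1 != e2 ->
    (e1 :&: e2 != set0) -> col e1 != col e2.

Definition has_disjoint_proper_S_trees (adj : rel T) c (col : coloring c)
    (S : {set T}) (l : nat) : Prop :=
  exists (V : 'I_l -> {set T}) (E : 'I_l -> {set {set T}}),
    [/\ (forall i, is_tree adj (V i) (E i)),
        (forall i, S \subset V i),
        (forall i, proper_tree col (E i)),
        (forall i j, i != j -> [disjoint E i & E j])
      & (forall i j, i != j -> V i :&: V j = S)].

Definition kl_proper_coloring (adj : rel T) (k l : nat) c (col : coloring c)
  : Prop :=
  forall S : {set T}, #|S| = k -> has_disjoint_proper_S_trees adj col S l.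

Definition px_eq (adj : rel T) (k l m : nat) : Prop :=
  (exists col : coloring m, kl_proper_coloring adj k l col) /\
  (forall c (col : coloring c), kl_proper_coloring adj k l col -> m <= c).

End Defs.

Definition Kn (n : nat) : rel 'I_n := fun x y => x != y.
Arguments Kn n : clear implicits.

From mathcomp Require Import all_boot.
Set Implicit Arguments. Unset Strict Implicit. Unset Printing Implicit Defensive.

(* Color the edges of K_n red and blue as follows.  On the vertices 0, 1, 2, 3
   the red edges form the path 3-0-1-2 and the blue ones the complementary path
   1-3-2-0; every other ("outer") vertex is joined to these four by red edges
   and to the other outer vertices by blue ones.  The color of an edge only
   depends on the kinds [minn v 4] of its ends, so every 3-set S is the image,
   under a map that is injective and kind-preserving on 0, 1, 2, 3 and S, of a
   3-set of the seven-vertex model 0, ..., 6.  There a table gives two paths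
   through S, alternating in color, meeting exactly in S and sharing no edge,
   which is checked by computation; their images are two internally disjoint
   proper S-trees.  One color does not suffice: a monochromatic proper tree is
   a matching, hence has at most two vertices. *)

Section PathSequences.
Variable T : eqType.

Definition path_edges (p : seq T) : seq (T * T) := zip p (behead p).

Lemma path_edges_cons2 a b r :
  path_edges [:: a, b & r] = (a, b) :: path_edges (b :: r).
Proof. by []. Qed.

Lemma mem_path_edges p e : e \in path_edges p -> (e.1 \in p) && (e.2 \in p).
Proof.
elim: p => [|a [|b r] IH] //; rewrite path_edges_cons2 inE => /orP[/eqP -> |].
  by rewrite /= !inE !eqxx orbT.
by case/IH/andP => h1 h2; rewrite h1 in_cons h2 !orbT.
Qed.

Lemma uniq_sorted_neq p : uniq p -> sorted (fun x y : T => x != y) p.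
Proof.
elim: p => [|a [|b r] IH] //= /andP[ar ur].
by rewrite -/(sorted _ (b :: r)) IH // andbT; apply: contraNneq ar => ->; apply: mem_head.
Qed.

Definition same_edge (e f : T * T) := (e == f) || (e == (f.2, f.1)).

Variables (C : eqType) (ec : T -> T -> C).

Definition alternating (p : seq T) : bool :=
  sorted (fun c1 c2 => c1 != c2) [seq ec e.1 e.2 | e <- path_edges p].

Lemma alternating_cons3 a b c r :
  alternating [:: a, b, c & r] = (ec a b != ec b c) && alternating [:: b, c & r].
Proof. by []. Qed.

Lemma alternating_behead a p : alternating (a :: p) -> alternating p.
Proof. by case: p => [|b [|c r]] //; rewrite alternating_cons3 => /andP[]. Qed.

Definition disjoint_alternating_paths (S p1 p2 : seq T) : bool :=
  [&& uniq p1, uniq p2, alternating p1, alternating p2,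
      all (mem p1) S, all (mem p2) S, all (fun x => (x \in p2) ==> (x \in S)) p1
    & ~~ has (fun e => has (same_edge e) (path_edges p2)) (path_edges p1)].

End PathSequences.

Lemma path_edges_map (T U : eqType) (f : T -> U) p :
  path_edges (map f p) = [seq (f e.1, f e.2) | e <- path_edges p].
Proof. by elim: p => [|a [|b r] IH] //; rewrite !map_cons path_edges_cons2 -IH. Qed.

Section CertificateMap.
Variables (T U C : eqType) (ecT : T -> T -> C) (ecU : U -> U -> C).
Variables (f : T -> U) (D : seq T).
Hypothesis f_inj : {in D &, injective f}.
Hypothesis f_ec : {in D &, forall x y, ecU (f x) (f y) = ecT x y}.

Lemma mem_map_in p x : {subset p <= D} -> x \in D -> (f x \in map f p) = (x \in p).
Proof.
move=> pD xD; apply/mapP/idP => [[y yp /f_inj fxy]|]; last by exists x.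
by rewrite fxy // pD.
Qed.

Lemma alternating_map p : {subset p <= D} ->
  alternating ecU (map f p) = alternating ecT p.
Proof.
move=> pD; rewrite /alternating path_edges_map -map_comp; congr sorted.
apply/eq_in_map => e /mem_path_edges /andP[e1 e2] /=.
by rewrite f_ec ?pD.
Qed.

Lemma same_edge_map x1 x2 y1 y2 : {subset [:: x1; x2; y1; y2] <= D} ->
  same_edge (f x1, f x2) (f y1, f y2) = same_edge (x1, x2) (y1, y2).
Proof.
move=> sD; have feq := inj_in_eq f_inj.
by rewrite /same_edge /= !xpair_eqE !feq ?sD ?inE ?eqxx ?orbT.
Qed.

Lemma disjoint_alternating_paths_map S p1 p2 : {subset S ++ p1 ++ p2 <= D} ->
  disjoint_alternating_paths ecT S p1 p2 ->
  disjoint_alternating_paths ecU (map f S) (map f p1) (map f p2).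
Proof.
move=> sD; have SD : {subset S <= D} by move=> x xS; rewrite sD ?mem_cat ?xS.
have p1D : {subset p1 <= D} by move=> x xp; rewrite sD // !mem_cat xp orbT.
have p2D : {subset p2 <= D} by move=> x xp; rewrite sD // !mem_cat xp !orbT.
case/and5P=> u1 u2 a1 a2 /and4P[S1 S2 i12 ed].
have inj1 : {in p1 &, injective f} := sub_in2 p1D f_inj.
have inj2 : {in p2 &, injective f} := sub_in2 p2D f_inj.
rewrite /disjoint_alternating_paths !map_inj_in_uniq // u1 u2.
rewrite !alternating_map ?a1 ?a2 // !all_map /=.
apply/and4P; split.
- by apply/allP => x xS /=; rewrite mem_map_in ?SD //; apply: (allP S1).
- by apply/allP => x xS /=; rewrite mem_map_in ?SD //; apply: (allP S2).
- by apply/allP => x xp /=; rewrite !mem_map_in ?p1D //; apply: (allP i12).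
rewrite !path_edges_map has_map; apply: contra ed => /hasP[e ep /= h]; apply/hasP.
exists e => //; move: h; rewrite has_map => /hasP[g gp /=].
have /andP[e1 e2] := mem_path_edges ep; have /andP[g1 g2] := mem_path_edges gp.
rewrite same_edge_map => [sg|]; first by apply/hasP; exists g.
by move=> x; rewrite !inE => /or4P[] /eqP ->; [apply: p1D | apply: p1D | apply: p2D | apply: p2D].
Qed.

End CertificateMap.

Section PathTrees.
Variable T : finType.

Lemma set2_same_edge (a b x y : T) : [set a; b] = [set x; y] -> same_edge (a, b) (x, y).
Proof.
move=> E; rewrite /same_edge !xpair_eqE.
have ax : a \in [set x; y] by rewrite -E set21.
have bx : b \in [set x; y] by rewrite -E set22.
have xa : x \in [set a; b] by rewrite E set21.
have ya : y \in [set a; b] by rewrite E set22.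
by move: ax bx xa ya; do 4![case/set2P=> ?]; subst; rewrite ?eqxx ?orbT.
Qed.

Definition edge_set (p : seq T) : {set {set T}} :=
  [set [set e.1; e.2] | e in path_edges p].

Lemma edge_set_le1 p : size p <= 1 -> edge_set p = set0.
Proof. by case: p => [|a []] // _; apply/setP => E; rewrite inE; apply/imsetP => -[]. Qed.

Lemma edge_set_cons2 a b r :
  edge_set [:: a, b & r] = [set a; b] |: edge_set (b :: r).
Proof.
apply/setP => E; rewrite /edge_set path_edges_cons2 in_setU1.
apply/imsetP/orP => [[e] | [/eqP -> | /imsetP[e ep ->]]].
- by rewrite inE => /orP[/eqP -> -> | ep ->]; [left | right; apply: imset_f].
- by exists (a, b); rewrite ?inE ?eqxx.
- by exists e; rewrite // inE ep orbT.
Qed.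

Lemma edge_set_sub p E : E \in edge_set p -> E \subset [set x in p].
Proof.
case/imsetP=> e /mem_path_edges /andP[e1 e2] ->.
by apply/subsetP => x /set2P[] ->; rewrite inE.
Qed.

Lemma edge_set_edges (adj : rel T) p : sorted adj p -> edge_set p \subset edges adj.
Proof.
elim: p => [|a [|b r] IH] /=; try by rewrite edge_set_le1 ?sub0set.
case/andP=> ab br; rewrite edge_set_cons2 subUset IH // andbT sub1set inE.
by apply/existsP; exists a; apply/existsP; exists b; rewrite ab eqxx.
Qed.

Lemma erel_sym (E : {set {set T}}) : symmetric (erel E).
Proof. by move=> x y; rewrite /erel setUC. Qed.

Lemma edge_set_connect p x y : x \in p -> y \in p -> connect (erel (edge_set p)) x y.
Proof.
suff to_head a r z : z \in a :: r -> connect (erel (edge_set (a :: r))) z a.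
  case: p => // a r xp yp; rewrite (connect_trans (to_head _ _ _ xp)) //.
  by rewrite (sym_connect_sym (erel_sym _)); apply: to_head.
elim: r a => [|b r IH] a; first by rewrite inE => /eqP ->.
rewrite in_cons => /orP[/eqP -> // | zp].
have sub : subrel (erel (edge_set (b :: r))) (connect (erel (edge_set [:: a, b & r]))).
  by move=> u v uv; apply: connect1; rewrite /erel edge_set_cons2 in_setU1 -/(erel _ u v) uv orbT.
apply: connect_trans (connect_sub sub (IH b zp)) _.
by apply: connect1; rewrite /erel edge_set_cons2 setUC in_setU1 eqxx.
Qed.

Lemma card_edge_set p : uniq p -> #|edge_set p| = (size p).-1.
Proof.
elim: p => [|a [|b r] IH] /=; try by rewrite edge_set_le1 ?cards0.
case/andP=> ar ur; rewrite edge_set_cons2 cardsU1 IH //.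
suff -> : [set a; b] \notin edge_set (b :: r) by [].
apply/negP => /edge_set_sub /subsetP /(_ a (set21 a b)).
by rewrite inE (negPf ar).
Qed.

Lemma path_is_tree (adj : rel T) p : uniq p -> p != [::] -> sorted adj p ->
  is_tree adj [set x in p] (edge_set p).
Proof.
move=> up p0 adjp; split.
- exact: edge_set_edges.
- exact: edge_set_sub.
- by case: p p0 {up adjp} => // a r _; apply/set0Pn; exists a; rewrite inE mem_head.
- by move=> x y; rewrite !inE; apply: edge_set_connect.
- rewrite card_edge_set // cardsE (card_uniqP up) addn1 prednK //.
  by rewrite lt0n size_eq0.
Qed.

Lemma edge_set_head y r E : uniq (y :: r) -> E \in edge_set (y :: r) -> y \in E ->
  exists z r', r = z :: r' /\ E = [set y; z].
Proof.
case: r => [|z r] /andP[yr _]; first by rewrite edge_set_le1 ?inE.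
rewrite edge_set_cons2 in_setU1 => /orP[/eqP -> _ | /edge_set_sub/subsetP sub /sub].
  by exists z, r.
by rewrite inE (negPf yr).
Qed.

Variables (c : nat) (col : coloring T c).

Lemma alternating_proper p : uniq p -> alternating (fun x y => col [set x; y]) p ->
  proper_tree col (edge_set p).
Proof.
elim: p => [|x [|y r] IH] up altp; try by move=> e1; rewrite edge_set_le1 ?inE.
have /andP[xr uyr] := up.
have new_edge E : E \in edge_set (y :: r) -> E :&: [set x; y] != set0 ->
    col [set x; y] != col E.
  move=> Er /set0Pn[w]; rewrite !inE => /andP[wE /orP[] /eqP ew]; subst w.
    by have := subsetP (edge_set_sub Er) x wE; rewrite inE (negPf xr).
  have [z [r' [rE ->]]] := edge_set_head uyr Er wE.
  by move: altp; rewrite rE alternating_cons3 => /andP[].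
move=> e1 e2; rewrite edge_set_cons2 !in_setU1.
case/orP=> [/eqP -> | e1r] /orP[/eqP -> | e2r]; first by rewrite eqxx.
- by move=> _; rewrite setIC; apply: new_edge.
- by move=> _ meet; rewrite eq_sym; apply: new_edge.
- exact: IH (alternating_behead altp) _ _ e1r e2r.
Qed.

Lemma disjoint_alternating_paths_trees S p1 p2 : S != [::] ->
  disjoint_alternating_paths (fun x y => col [set x; y]) S p1 p2 ->
  has_disjoint_proper_S_trees (fun x y : T => x != y) col [set x in S] 2.
Proof.
move=> S0 /and5P[u1 u2 a1 a2 /and4P[S1 S2 i12 ed]].
have nonempty (q : seq T) : all (mem q) S -> q != [::].
  by case: S S0 {S1 S2 i12} => // x S' _ /andP[]; case: q.
have tree q : uniq q -> all (mem q) S -> is_tree (fun x y : T => x != y) [set x in q] (edge_set q).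
  by move=> uq Sq; apply: path_is_tree; rewrite ?nonempty ?uniq_sorted_neq.
have disj : [disjoint edge_set p1 & edge_set p2].
  rewrite -setI_eq0; apply/eqP/setP => E; rewrite !inE; apply/negP => /andP[].
  case/imsetP=> e ep -> /imsetP[f fp /set2_same_edge ef].
  by case/negP: ed; apply/hasP; exists e => //; apply/hasP; exists f.
have meet : [set x in p1] :&: [set x in p2] = [set x in S].
  apply/setP => x; rewrite !inE; apply/andP/idP => [[x1 x2] | xS].
    by have := implyP (allP i12 x x1); apply.
  by rewrite (allP S1 x xS : x \in p1) (allP S2 x xS : x \in p2).
exists (fun i : 'I_2 => if i == ord0 then [set x in p1] else [set x in p2]),
       (fun i : 'I_2 => if i == ord0 then edge_set p1 else edge_set p2).
split.
- by move=> i; case: ifP => _; apply: tree.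
- by move=> i; case: ifP => _; apply/subsetP => x; rewrite !inE; apply: allP.
- by move=> i; case: ifP => _; apply: alternating_proper.
- by case=> [[|[|?]] ?] [[|[|?]] ?] //= _; rewrite disjoint_sym.
- by case=> [[|[|?]] ?] [[|[|?]] ?] //= _; rewrite setIC.
Qed.

End PathTrees.

Section LowerBound.
Variable T : finType.

Lemma matching_connect (E : {set {set T}}) x y :
  {in E &, forall e1 e2, e1 != e2 -> e1 :&: e2 = set0} ->
  connect (erel E) x y -> (y == x) || ([set x; y] \in E).
Proof.
move=> matching; set P := fun v => (v == x) || ([set x; v] \in E).
have step u v : P u -> erel E u v -> P v.
  rewrite /P /erel => /orP[/eqP -> xv | xu uv]; first by rewrite xv orbT.
  have [uvE | ne] := eqVneq [set x; u] [set u; v].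
    by have := set22 u v; rewrite -uvE => /set2P[] ->; rewrite ?eqxx ?xu ?orbT.
  by have /setP/(_ u) := matching _ _ xu uv ne; rewrite !inE !eqxx orbT.
suff along u p : P u -> path (erel E) u p -> P (last u p).
  by case/connectP=> p xp ->; apply: along xp; rewrite /P eqxx.
elim: p u => [|z p IH] u Pu //= /andP[uz zp].
exact: IH (step _ _ Pu uz) zp.
Qed.

Lemma monochromatic_tree_card (adj : rel T) c (col : coloring T c) V E :
  (forall e1 e2, col e1 = col e2) -> is_tree adj V E -> proper_tree col E ->
  #|V| <= 2.
Proof.
move=> mono [_ _ V0 conn _] prop.
have matching : {in E &, forall e1 e2, e1 != e2 -> e1 :&: e2 = set0}.
  move=> e1 e2 e1E e2E ne; apply/eqP/negPn/negP => meet.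
  by have := prop _ _ e1E e2E ne meet; rewrite (mono e1 e2) eqxx.
have /set0Pn[x xV] := V0.
have nbr z : z \in V -> (z == x) || ([set x; z] \in E).
  by move=> zV; apply: matching_connect matching (conn _ _ xV zV).
suff [y Vxy] : exists y, V \subset [set x; y].
  by rewrite (leq_trans (subset_leq_card Vxy)) // cards2 ltnS leq_b1.
case: (pickP (mem (V :\ x))) => [y | none]; last first.
  exists x; apply/subsetP => z zV; have := none z.
  by rewrite !inE zV andbT orbb => /negbFE.
rewrite !inE => /andP[yx yV]; exists y; apply/subsetP => z zV.
have xyE : [set x; y] \in E by move: (nbr y yV); rewrite (negPf yx).
have [-> | zx] := eqVneq z x; first exact: set21.
have xzE : [set x; z] \in E by move: (nbr z zV); rewrite (negPf zx).
have [-> | zy] := eqVneq z y; first exact: set22.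
have ne : [set x; z] != [set x; y].
  apply: contraNneq zy => e; have := set22 x z.
  by rewrite e => /set2P[/eqP | ->]; rewrite ?(negPf zx).
by have /setP/(_ x) := matching _ _ xzE xyE ne; rewrite !inE !eqxx.
Qed.

Lemma kl_proper_coloring_ge2 (adj : rel T) k l c (col : coloring T c) :
  2 < k <= #|T| -> 0 < l -> kl_proper_coloring adj k l col -> 1 < c.
Proof.
case/andP=> k3 kT l0 klcol.
pose S := [set x in take k (enum T)].
have cardS : #|S| = k.
  by rewrite cardsE (card_uniqP _) ?take_uniq ?enum_uniq // size_takel // -cardE.
have [V [E [tree SV prop _ _]]] := klcol S cardS.
case: c col {klcol} V E tree SV prop => [|[|c]] col V E tree SV prop //.
  by case: (col set0).
have mono e1 e2 : col e1 = col e2 by rewrite (ord1 (col e1)) (ord1 (col e2)).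
pose i := Ordinal l0.
have := leq_trans (subset_leq_card (SV i)) (monochromatic_tree_card mono (tree i) (prop i)).
by rewrite cardS leqNgt k3.
Qed.

End LowerBound.

Definition kind (v : nat) : nat := minn v 4.

Definition red_kinds (i j : nat) : bool :=
  if (i == 4) || (j == 4) then i != j
  else (minn i j, maxn i j) \in [:: (0, 1); (1, 2); (0, 3)].

Definition red (u v : nat) : bool := red_kinds (kind u) (kind v).

Lemma red_kinds_sym i j : red_kinds i j = red_kinds j i.
Proof. by rewrite /red_kinds orbC (eq_sym j i) minnC maxnC. Qed.

Lemma red_sym u v : red u v = red v u.
Proof. exact: red_kinds_sym. Qed.

Definition two_color (b : bool) : 'I_2 := if b then ord_max else ord0.

Definition Kn_coloring n : coloring 'I_n 2 :=
  fun e => two_color [exists x, exists y, (e == [set x; y]) && red x y].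

Lemma Kn_coloring_set2 n (x y : 'I_n) : Kn_coloring [set x; y] = two_color (red x y).
Proof.
rewrite /Kn_coloring; congr two_color; apply/existsP/idP => [[a /existsP[b]] | xy].
  case/andP=> /eqP /esym /set2_same_edge.
  by rewrite /same_edge !xpair_eqE /= => /orP[]/andP[/eqP -> /eqP ->]; rewrite // red_sym.
by exists x; apply/existsP; exists y; rewrite eqxx.
Qed.

Definition witness_table : seq (seq nat * (seq nat * seq nat)) := [::
  ([:: 0; 1; 2], ([:: 1; 0; 2], [:: 0; 3; 1; 2]));
  ([:: 0; 1; 3], ([:: 0; 1; 3], [:: 0; 3; 2; 1]));
  ([:: 0; 1; 4], ([:: 0; 1; 3; 4], [:: 1; 2; 0; 4]));
  ([:: 0; 1; 5], ([:: 0; 1; 3; 5], [:: 1; 2; 0; 5]));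
  ([:: 0; 1; 6], ([:: 0; 1; 3; 6], [:: 1; 2; 0; 6]));
  ([:: 0; 2; 3], ([:: 0; 3; 2], [:: 0; 2; 1; 3]));
  ([:: 0; 2; 4], ([:: 2; 0; 4], [:: 0; 3; 2; 4]));
  ([:: 0; 2; 5], ([:: 2; 0; 5], [:: 0; 3; 2; 5]));
  ([:: 0; 2; 6], ([:: 2; 0; 6], [:: 0; 3; 2; 6]));
  ([:: 0; 3; 4], ([:: 0; 1; 3; 4], [:: 0; 3; 2; 4]));
  ([:: 0; 3; 5], ([:: 0; 1; 3; 5], [:: 0; 3; 2; 5]));
  ([:: 0; 3; 6], ([:: 0; 1; 3; 6], [:: 0; 3; 2; 6]));
  ([:: 0; 4; 5], ([:: 0; 4; 5], [:: 4; 2; 0; 5]));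
  ([:: 0; 4; 6], ([:: 0; 4; 6], [:: 4; 2; 0; 6]));
  ([:: 0; 5; 6], ([:: 0; 5; 6], [:: 5; 2; 0; 6]));
  ([:: 1; 2; 3], ([:: 1; 2; 3], [:: 1; 3; 0; 2]));
  ([:: 1; 2; 4], ([:: 1; 0; 2; 4], [:: 1; 2; 3; 4]));
  ([:: 1; 2; 5], ([:: 1; 0; 2; 5], [:: 1; 2; 3; 5]));
  ([:: 1; 2; 6], ([:: 1; 0; 2; 6], [:: 1; 2; 3; 6]));
  ([:: 1; 3; 4], ([:: 3; 1; 4], [:: 1; 2; 3; 4]));
  ([:: 1; 3; 5], ([:: 3; 1; 5], [:: 1; 2; 3; 5]));
  ([:: 1; 3; 6], ([:: 3; 1; 6], [:: 1; 2; 3; 6]));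
  ([:: 1; 4; 5], ([:: 1; 4; 5], [:: 4; 3; 1; 5]));
  ([:: 1; 4; 6], ([:: 1; 4; 6], [:: 4; 3; 1; 6]));
  ([:: 1; 5; 6], ([:: 1; 5; 6], [:: 5; 3; 1; 6]));
  ([:: 2; 3; 4], ([:: 2; 3; 4], [:: 3; 0; 2; 4]));
  ([:: 2; 3; 5], ([:: 2; 3; 5], [:: 3; 0; 2; 5]));
  ([:: 2; 3; 6], ([:: 2; 3; 6], [:: 3; 0; 2; 6]));
  ([:: 2; 4; 5], ([:: 2; 4; 5], [:: 4; 0; 2; 5]));
  ([:: 2; 4; 6], ([:: 2; 4; 6], [:: 4; 0; 2; 6]));
  ([:: 2; 5; 6], ([:: 2; 5; 6], [:: 5; 0; 2; 6]));
  ([:: 3; 4; 5], ([:: 3; 4; 5], [:: 4; 1; 3; 5]));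
  ([:: 3; 4; 6], ([:: 3; 4; 6], [:: 4; 1; 3; 6]));
  ([:: 3; 5; 6], ([:: 3; 5; 6], [:: 5; 1; 3; 6]));
  ([:: 4; 5; 6], ([:: 4; 0; 2; 5; 6], [:: 4; 5; 1; 3; 6]))].

Definition witness (m : seq nat) : seq nat * seq nat :=
  (nth ([::], ([::], [::])) witness_table
     (find (fun w => perm_eq w.1 m) witness_table)).2.

Definition model_color (u v : nat) : 'I_2 := two_color (red u v).

Definition witness_valid (m : seq nat) : bool :=
  let w := witness m in
  disjoint_alternating_paths model_color m w.1 w.2 && all (mem (iota 0 4 ++ m)) (w.1 ++ w.2).

Lemma witness_valid_triples :
  all (fun a => all (fun b => all (fun c =>
    uniq [:: a; b; c] ==> witness_valid [:: a; b; c]) (iota 0 7)) (iota 0 7)) (iota 0 7).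
Proof. by vm_compute. Qed.

Lemma witness_valid_triple m : uniq m -> size m = 3 -> all (fun u => u < 7) m -> witness_valid m.
Proof.
case: m => [|a [|b [|c []]]] // um _ /and4P[a7 b7 c7 _].
have lt7 x : x < 7 -> x \in iota 0 7 by rewrite mem_iota.
move: witness_valid_triples => /allP/(_ a (lt7 a a7)) /allP/(_ b (lt7 b b7)).
by move=> /allP/(_ c (lt7 c c7)); rewrite um.
Qed.

Section Encoding.
Variables (n : nat) (s : seq 'I_n.+4).

Definition encode (v : 'I_n.+4) : nat := if v < 4 then val v else 4 + index v s.

Definition decode (u : nat) : 'I_n.+4 := if u < 4 then inord u else nth ord0 s (u - 4).

Definition model_support : seq nat := iota 0 4 ++ map encode s.

Lemma encode_lt v : v \in s -> encode v < 4 + size s.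
Proof.
rewrite /encode; case: (ltnP v 4) => [v4 _ | _]; last by rewrite ltn_add2l index_mem.
exact: leq_trans v4 (leq_addr _ _).
Qed.

Lemma decode_encode v : v \in s -> decode (encode v) = v.
Proof.
rewrite /encode /decode; case: (ltnP v 4) => v4 vs; first by rewrite v4 inord_val.
by rewrite ltnNge leq_addr /= addKn nth_index.
Qed.

Lemma encode_decode : {in model_support, cancel decode encode}.
Proof.
move=> u; rewrite mem_cat mem_iota add0n => /orP[/andP[_ u4] | /mapP[v vs ->]].
  have uK : (inord u : 'I_n.+4) = u :> nat by rewrite inordK // (leq_trans u4).
  by rewrite /decode /encode u4 uK u4.
by rewrite decode_encode.
Qed.

Lemma kind_decode u : u \in model_support -> kind (decode u) = kind u.
Proof.
rewrite /kind mem_cat mem_iota add0n => /orP[/andP[_ u4] | /mapP[v vs ->]].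
  by rewrite /decode u4 inordK // (leq_trans u4).
rewrite decode_encode // /encode; case: ifP => // /negbT; rewrite -leqNgt => v4.
by rewrite (minn_idPr v4) (minn_idPr (leq_addr _ _)).
Qed.

End Encoding.

Lemma Kn_coloring_S_trees n (S : {set 'I_n.+4}) : #|S| = 3 ->
  has_disjoint_proper_S_trees (Kn n.+4) (@Kn_coloring n.+4) S 2.
Proof.
move=> S3; rewrite -(set_enum S); set s := enum S.
have size_s : size s = 3 by rewrite -S3 cardE.
have decK := @encode_decode n s.
pose m := map (encode s) s.
have /andP[cert support] : witness_valid m.
  apply: witness_valid_triple; rewrite ?size_map //.
    by rewrite map_inj_in_uniq ?enum_uniq //; apply: can_in_inj (@decode_encode n s).
  by rewrite all_map; apply/allP => v vs /=; have := encode_lt vs; rewrite size_s.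
have supp : {subset m ++ (witness m).1 ++ (witness m).2 <= model_support s}.
  move=> u; rewrite mem_cat => /orP[um | /(allP support) //].
  by rewrite mem_cat um orbT.
have ec : {in model_support s &, forall u v,
    Kn_coloring [set decode s u; decode s v] = model_color u v}.
  by move=> u v us vs; rewrite Kn_coloring_set2 /model_color /red !kind_decode.
have := disjoint_alternating_paths_map (ecU := fun x y => Kn_coloring [set x; y])
  (can_in_inj decK) ec supp cert.
have -> : map (decode s) m = s by rewrite -map_comp map_id_in // => v; apply: decode_encode.
by apply: disjoint_alternating_paths_trees; rewrite -size_eq0 size_s.
Qed.

Theorem theorem2p4 (n : nat) : 4 <= n -> px_eq (Kn n) 3 2 2.
Proof.
case: n => [|[|[|[|n]]]] // _; split.
  by exists (@Kn_coloring n.+4) => S; apply: Kn_coloring_S_trees.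
by move=> c col; apply: kl_proper_coloring_ge2 => //; rewrite card_ord.
Qed.
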